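(* Let $n\ge1$ and let $A\subseteq\mathbb{R}^n$ (Euclidean norm) be a nonempty approximately convex set with $\mathcal{H}(A,\operatorname{Co}(A))\ge\log_2 n-1$. Then for every integer $j$ with $1\le j\le n$, $$\operatorname{diam}(A)\ge\frac{(\log_2 n-1-\lceil\log_2 j\rceil)\sqrt j}{\sqrt{n-j+1}}\,\sqrt n .$$ In particular $\operatorname{diam}(A)\ge0.7525\sqrt n$ for all $n\ge20$, and $\operatorname{diam}(A)\ge0.768\sqrt n$ for all sufficiently large $n$.
   Context: A set $A$ is approximately convex if $d(tx+(1-t)y,A)\le1$ for all $x,y\in A$, $t\in[0,1]$, where $d(x,A)=\inf_{a\in A}\|x-a\|$. $\mathcal{H}$ is the Hausdorff distance, $\operatorname{Co}$ the convex hull, $\operatorname{diam}(A)=\sup\{\|x-y\|:x,y\in A\}$, and $\lceil x\rceil$ the least integer $\ge x$. *)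

From HB Require Import structures.
From mathcomp Require Import all_boot all_order all_algebra.
From mathcomp Require Import all_classical all_reals.
From mathcomp Require Import ereal exp.
Set Implicit Arguments. Unset Strict Implicit. Unset Printing Implicit Defensive.
Import Order.TTheory GRing.Theory Num.Theory.
Local Open Scope ring_scope.
Local Open Scope classical_set_scope.

Section Defs.
Variables (R : realType) (n : nat).

Definition enorm (x : 'rV[R]_n) : R := Num.sqrt (\sum_(i < n) x ord0 i ^+ 2).

(* d(x, A) = inf_{a in A} ||x - a|| (extended real; +oo for empty A) *)
Definition edist (x : 'rV[R]_n) (A : set 'rV[R]_n) : \bar R :=
  ereal_inf [set (enorm (x - a))%:E | a in A].

Definition approx_convex (A : set 'rV[R]_n) : Prop :=
  forall x y, A x -> A y -> forall t : R, 0 <= t <= 1 ->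
    (edist (t *: x + (1 - t) *: y) A <= 1%:E)%E.

Definition convex_hull (A : set 'rV[R]_n) : set 'rV[R]_n :=
  [set y | exists (k : nat) (w : 'I_k -> R) (p : 'I_k -> 'rV[R]_n),
     (forall i, 0 <= w i) /\ \sum_(i < k) w i = 1 /\ (forall i, A (p i)) /\
     y = \sum_(i < k) w i *: p i].

Definition hausdorff (A B : set 'rV[R]_n) : \bar R :=
  maxe (ereal_sup [set edist a B | a in A]) (ereal_sup [set edist b A | b in B]).

Definition diam (A : set 'rV[R]_n) : \bar R :=
  ereal_sup [set (enorm (p.1 - p.2))%:E | p in A `*` A].

End Defs.

Definition log2 {R : realType} (x : R) : R := ln x / ln 2.

(* A point x = sum_i w_i a_i of Co(A) is the barycentre of a finite weighted
   family whose variance sum_i w_i |a_i - x|^2 is at most diam(A)^2 / 2.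
   Replacing the family by all pairwise midpoints, with product weights, keeps
   the barycentre, halves the variance and, by approximate convexity, moves
   every point at most 1 further away from A.  After m rounds some point of the
   family lies within m of A and within diam(A) / sqrt(2^(m+1)) of x, so
   H(A, Co A) <= m + diam(A) / sqrt(2^(m+1)) for every m.  The stated bounds
   follow from this inequality with m = ceil(log2 j), resp. m = floor(log2(n/8)). *)

From HB Require Import structures.
From mathcomp Require Import all_boot all_order all_algebra.
From mathcomp Require Import all_classical all_reals.
From mathcomp Require Import ereal exp.
From mathcomp Require Import ring lra zify.
Import Order.TTheory GRing.Theory Num.Theory.
Local Open Scope ring_scope.
Local Open Scope classical_set_scope.
Set Implicit Arguments. Unset Strict Implicit. Unset Printing Implicit Defensive.

Section Euclid.
Variables (R : realType) (n : nat).
Implicit Types u v w : 'rV[R]_n.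

Definition dot u v : R := (u *m v^T) 0 0.
Definition sq u : R := dot u u.

Lemma dotE u v : dot u v = \sum_(i < n) u 0 i * v 0 i.
Proof. by rewrite /dot /mulmx mxE; apply: eq_bigr => i _; rewrite mxE. Qed.

Lemma sq_enorm u : enorm u ^+ 2 = sq u.
Proof.
rewrite sqr_sqrtr /sq ?dotE; last by apply: sumr_ge0 => i _; apply: sqr_ge0.
by apply: eq_bigr => i _; rewrite expr2.
Qed.

Lemma enorm_ge0 u : 0 <= enorm u.
Proof. exact: sqrtr_ge0. Qed.

Lemma sq_ge0 u : 0 <= sq u.
Proof. by rewrite -sq_enorm sqr_ge0. Qed.

Lemma enormE u : enorm u = Num.sqrt (sq u).
Proof. by rewrite -sq_enorm sqrtr_sqr ger0_norm ?enorm_ge0. Qed.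

Lemma dotC u v : dot u v = dot v u.
Proof. by rewrite !dotE; apply: eq_bigr => i _; rewrite mulrC. Qed.

Lemma dotDl u v w : dot (u + v) w = dot u w + dot v w.
Proof. by rewrite !dotE -big_split; apply: eq_bigr => i _; rewrite mxE mulrDl. Qed.

Lemma dotZl a u v : dot (a *: u) v = a * dot u v.
Proof. by rewrite !dotE mulr_sumr; apply: eq_bigr => i _; rewrite mxE mulrA. Qed.

Lemma dotBl u v w : dot (u - v) w = dot u w - dot v w.
Proof. by rewrite dotDl -scaleN1r dotZl mulN1r. Qed.

Lemma dotDr u v w : dot w (u + v) = dot w u + dot w v.
Proof. by rewrite dotC dotDl !(dotC w). Qed.

Lemma dotZr a u v : dot v (a *: u) = a * dot v u.
Proof. by rewrite dotC dotZl dotC. Qed.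

Lemma dotBr u v w : dot w (u - v) = dot w u - dot w v.
Proof. by rewrite dotC dotBl !(dotC w). Qed.

Lemma dot0l v : dot 0 v = 0.
Proof. by rewrite dotE big1 // => i _; rewrite mxE mul0r. Qed.

Lemma dot_sumr (I : finType) (c : I -> R) (q : I -> 'rV[R]_n) v :
  dot v (\sum_i c i *: q i) = \sum_i c i * dot v (q i).
Proof.
rewrite dotE; under eq_bigr => k _ do rewrite summxE mulr_sumr.
rewrite exchange_big /=; apply: eq_bigr => i _.
by rewrite dotE mulr_sumr; apply: eq_bigr => k _; rewrite mxE mulrCA.
Qed.

Lemma sqD u v : sq (u + v) = sq u + 2 * dot u v + sq v.
Proof. rewrite /sq dotDl !dotDr (dotC v u); ring. Qed.

Lemma sqB u v : sq (u - v) = sq u - 2 * dot u v + sq v.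
Proof. rewrite /sq dotBl !dotBr (dotC v u); ring. Qed.

Lemma sqZ a u : sq (a *: u) = a ^+ 2 * sq u.
Proof. by rewrite /sq dotZl dotZr mulrA expr2. Qed.

Lemma sqN u : sq (- u) = sq u.
Proof. by rewrite -scaleN1r sqZ sqrrN expr1n mul1r. Qed.

Lemma sq_eq0_dot u v : sq u = 0 -> dot u v = 0.
Proof.
move=> h; rewrite dotE big1 // => i _.
have /eqP : u 0 i ^+ 2 = 0.
  have h' : \sum_(j < n) u 0 j ^+ 2 = 0.
    by rewrite -[RHS]h /sq dotE; apply: eq_bigr => j _; rewrite expr2.
  by apply: (psumr_eq0P _ h') => // j _; apply: sqr_ge0.
by rewrite sqrf_eq0 => /eqP ->; rewrite mul0r.
Qed.

Lemma cauchy_schwarz u v : dot u v ^+ 2 <= sq u * sq v.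
Proof.
have [h|h] := eqVneq (sq v) 0.
  by rewrite h mulr0 dotC sq_eq0_dot // expr0n.
have hv : 0 < sq v by rewrite lt_def h sq_ge0.
have := sq_ge0 (u - (dot u v / sq v) *: v); rewrite sqB dotZr sqZ.
have -> : sq u - 2 * (dot u v / sq v * dot u v) + (dot u v / sq v) ^+ 2 * sq v
   = sq u - dot u v ^+ 2 / sq v by field.
by rewrite subr_ge0 ler_pdivrMr.
Qed.

Lemma dot_le_enorm u v : dot u v <= enorm u * enorm v.
Proof.
rewrite !enormE -sqrtrM ?sq_ge0 //; apply: (le_trans (ler_norm _)).
by rewrite -sqrtr_sqr; apply: ler_wsqrtr; apply: cauchy_schwarz.
Qed.

Lemma ler_enormD u v : enorm (u + v) <= enorm u + enorm v.
Proof.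
rewrite -(ler_pXn2r (n := 2)) // ?nnegrE ?addr_ge0 ?enorm_ge0 //.
rewrite sq_enorm sqD sqrrD !sq_enorm; have := dot_le_enorm u v; lra.
Qed.

Lemma enormZ a u : enorm (a *: u) = `|a| * enorm u.
Proof. by rewrite !enormE sqZ sqrtrM ?sqr_ge0 // sqrtr_sqr. Qed.

Lemma enorm0 : enorm (0 : 'rV[R]_n) = 0.
Proof. by rewrite enormE /sq dot0l sqrtr0. Qed.

End Euclid.

Section Distance.
Variables (R : realType) (n : nat) (A : set 'rV[R]_n).

Definition dist_le (y : 'rV[R]_n) (r : R) :=
  forall e, 0 < e -> exists2 a, A a & enorm (y - a) <= r + e.

Lemma dist_leP y r : dist_le y r <-> (edist y A <= r%:E)%E.
Proof.
split=> [H | H e he].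
  apply/lee_addgt0Pr => e /H [a Aa h].
  by apply: ge_ereal_inf; exists (enorm (y - a))%:E; [exists a | rewrite -EFinD lee_fin].
have : (edist y A < (r + e)%:E)%E.
  by apply: le_lt_trans H _; rewrite lte_fin ltrDl.
by case/ereal_inf_lt => _ [a Aa <-]; rewrite lte_fin => /ltW; exists a.
Qed.

Lemma dist_le_widen y r s : dist_le y r -> r <= s -> dist_le y s.
Proof.
move=> H hrs e /H [a Aa h]; exists a => //.
by apply: (le_trans h); rewrite lerD2r.
Qed.

Lemma dist_le_shift y z s : dist_le z s -> dist_le y (enorm (y - z) + s).
Proof.
move=> H e /H [a Aa h]; exists a => //.
have -> : y - a = (y - z) + (z - a) by rewrite addrA subrK.
by apply: (le_trans (ler_enormD _ _)); lra.
Qed.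

Lemma mem_dist_le0 a : A a -> dist_le a 0.
Proof. by move=> Aa e he; exists a; rewrite // subrr enorm0 add0r ltW. Qed.

Lemma dist_le_midpoint : approx_convex A -> forall y1 y2 r,
  dist_le y1 r -> dist_le y2 r -> dist_le (2^-1 *: y1 + 2^-1 *: y2) (r + 1).
Proof.
move=> hA y1 y2 r h1 h2 e he.
have he2 : 0 < e / 2 by rewrite divr_gt0.
have [b1 A1 hb1] := h1 _ he2; have [b2 A2 hb2] := h2 _ he2.
have : (edist (2^-1 *: b1 + (1 - 2^-1) *: b2) A <= 1%:E)%E.
  by apply: hA => //; rewrite invr_ge0 invf_le1 ?ler1n ?ler0n.
have -> : (1 - 2^-1 : R) = 2^-1 by field.
move=> /dist_leP /(_ _ he2) [a Aa ha]; exists a => //.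
have -> : 2^-1 *: y1 + 2^-1 *: y2 - a =
   (2^-1 *: (y1 - b1) + 2^-1 *: (y2 - b2)) + (2^-1 *: b1 + 2^-1 *: b2 - a).
  by apply/matrixP => i j; rewrite !mxE; ring.
apply: (le_trans (ler_enormD _ _)).
have := ler_enormD (2^-1 *: (y1 - b1)) (2^-1 *: (y2 - b2)).
rewrite !enormZ ger0_norm ?invr_ge0 //; lra.
Qed.

End Distance.

Definition bary (R : realType) (n : nat) (I : finType) (w : I -> R)
  (q : I -> 'rV[R]_n) : 'rV[R]_n := \sum_i w i *: q i.

Definition variance (R : realType) (n : nat) (I : finType) (w : I -> R)
  (q : I -> 'rV[R]_n) : R := \sum_i w i * sq (q i - bary w q).

Definition pairw (R : realType) (I : finType) (w : I -> R) (p : I * I) : R :=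
  w p.1 * w p.2.

Definition midpoints (R : realType) (n : nat) (I : finType) (q : I -> 'rV[R]_n)
  (p : I * I) : 'rV[R]_n := 2^-1 *: q p.1 + 2^-1 *: q p.2.

Section Barycentre.
Variables (R : realType) (n : nat) (I : finType) (w : I -> R).
Hypotheses (w_ge0 : forall i, 0 <= w i) (w_sum1 : \sum_i w i = 1).
Implicit Types q u : I -> 'rV[R]_n.

Lemma sum_centred q : \sum_i w i *: (q i - bary w q) = 0.
Proof.
under eq_bigr do rewrite scalerBr.
by rewrite sumrB -scaler_suml w_sum1 scale1r subrr.
Qed.

Lemma exists_sq_le_variance q : exists i, sq (bary w q - q i) <= variance w q.
Proof.
pose s i := sq (q i - bary w q).
have [i0 _ | I0] := pickP (@predT I); last first.
  by move: w_sum1; rewrite big_pred0 // => /eqP; rewrite eq_sym oner_eq0.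
case: (@arg_minP _ _ _ i0 xpredT s isT) => i _ hi.
exists i; rewrite -sqN opprB -[X in X <= _]mul1r -w_sum1 mulr_suml.
by apply: ler_sum => l _; rewrite ler_wpM2l // hi.
Qed.

Lemma sum_pairs_quadratic u a b c : \sum_i w i *: u i = 0 ->
  \sum_i \sum_l w i * w l * (a * sq (u i) + b * dot (u i) (u l) + c * sq (u l))
  = (a + c) * \sum_i w i * sq (u i).
Proof.
move=> hu.
transitivity (\sum_i (a * (w i * sq (u i)) + (c * \sum_l w l * sq (u l)) * w i)).
  apply: eq_bigr => i _.
  have -> : \sum_l w i * w l * (a * sq (u i) + b * dot (u i) (u l) + c * sq (u l))
    = w i * a * sq (u i) * (\sum_l w l) + w i * b * (\sum_l w l * dot (u i) (u l))
      + w i * c * (\sum_l w l * sq (u l)).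
    by rewrite !mulr_sumr -!big_split; apply: eq_bigr => l _ /=; ring.
  by rewrite -dot_sumr hu dotC dot0l w_sum1; ring.
by rewrite big_split /= -!mulr_sumr w_sum1; ring.
Qed.

Lemma variance_pairs q :
  \sum_i \sum_l w i * w l * sq (q i - q l) = 2 * variance w q.
Proof.
rewrite -(sum_pairs_quadratic 1 (-2) 1 (sum_centred q)); apply: eq_bigr => i _.
apply: eq_bigr => l _; congr (_ * _).
have -> : q i - q l = (q i - bary w q) - (q l - bary w q).
  by rewrite opprB addrA subrK.
by rewrite sqB; ring.
Qed.

Lemma variance_le_diam q (D : R) : (forall i l, enorm (q i - q l) <= D) ->
  variance w q <= D ^+ 2 / 2.
Proof.
move=> hD; rewrite ler_pdivlMr // mulrC -variance_pairs.
have -> : D ^+ 2 = \sum_i \sum_l w i * w l * D ^+ 2.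
  under eq_bigr => i _ do rewrite -mulr_suml -mulr_sumr w_sum1 mulr1.
  by rewrite -mulr_suml w_sum1 mul1r.
apply: ler_sum => i _; apply: ler_sum => l _.
rewrite ler_wpM2l ?mulr_ge0 // -sq_enorm ler_pXn2r ?nnegrE ?enorm_ge0 //.
exact: le_trans (enorm_ge0 _) (hD i l).
Qed.

Lemma pairw_ge0 p : 0 <= pairw w p.
Proof. exact: mulr_ge0. Qed.

Lemma pairw_sum1 : \sum_p pairw w p = 1.
Proof.
rewrite -(pair_bigA _ (fun i l => w i * w l)) /=.
by under eq_bigr => i _ do rewrite -mulr_sumr w_sum1 mulr1.
Qed.

Lemma bary_midpoints q : bary (pairw w) (midpoints q) = bary w q.
Proof.
rewrite /bary -(pair_bigA _ (fun i l => pairw w (i, l) *: midpoints q (i, l))) /=.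
transitivity (\sum_i \sum_l ((2^-1 * w l) *: (w i *: q i)
                             + (2^-1 * w i) *: (w l *: q l))).
  by do 2!apply: eq_bigr => ? _; apply/matrixP => a b; rewrite !mxE /pairw /=; ring.
under [LHS]eq_bigr do rewrite big_split.
rewrite big_split /= [X in _ + X = _]exchange_big /=.
have half_sum : \sum_i \sum_l (2^-1 * w l) *: (w i *: q i) = 2^-1 *: bary w q.
  rewrite scaler_sumr; apply: eq_bigr => i _.
  by rewrite -scaler_suml -mulr_sumr w_sum1 mulr1.
have halves : (2^-1 + 2^-1 : R) = 1 by field.
by rewrite half_sum -scalerDl halves scale1r.
Qed.

Lemma variance_midpoints q :
  variance (pairw w) (midpoints q) = variance w q / 2.
Proof.
rewrite /variance bary_midpoints.
rewrite -(pair_bigA _ (fun i l => pairw w (i, l) * sq (midpoints q (i, l) - bary w q))) /=.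
pose u i := q i - bary w q.
transitivity (\sum_i \sum_l w i * w l * ((2^-1) ^+ 2 * sq (u i)
    + (2 * (2^-1 * 2^-1)) * dot (u i) (u l) + (2^-1) ^+ 2 * sq (u l))).
  do 2!apply: eq_bigr => ? _; rewrite /pairw /midpoints /=.
  have -> : forall i l, 2^-1 *: q i + 2^-1 *: q l - bary w q = 2^-1 *: u i + 2^-1 *: u l.
    by move=> i l; apply/matrixP => a b; rewrite !mxE; field.
  by rewrite sqD !sqZ dotZl dotZr; ring.
by rewrite sum_pairs_quadratic ?sum_centred //; field.
Qed.

End Barycentre.

Section HullDistance.
Variables (R : realType) (n : nat) (A : set 'rV[R]_n).
Hypothesis A_convex : approx_convex A.

Lemma midpoint_iteration (m : nat) (I : finType) (w : I -> R) (q : I -> 'rV[R]_n)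
    (r : R) :
  (forall i, 0 <= w i) -> \sum_i w i = 1 -> (forall i, dist_le A (q i) r) ->
  exists2 y, dist_le A y (r + m%:R) & sq (bary w q - y) <= variance w q / 2 ^+ m.
Proof.
elim: m I w q r => [|m IH] I w q r w_ge0 w_sum1 hq.
  have [i hi] := exists_sq_le_variance w_ge0 w_sum1 q.
  by exists (q i); rewrite ?addr0 ?expr0 ?divr1.
have [y hy1 hy2] := IH _ _ (midpoints q) (r + 1) (pairw_ge0 w_ge0)
  (pairw_sum1 w_sum1) (fun p => dist_le_midpoint A_convex (hq p.1) (hq p.2)).
exists y.
  by apply: dist_le_widen hy1 _; rewrite -addn1 natrD; lra.
move: hy2; rewrite bary_midpoints // variance_midpoints //.
by rewrite exprS invfM mulrA.
Qed.

Lemma hull_dist_le (D : R) : (forall a b, A a -> A b -> enorm (a - b) <= D) ->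
  forall x, convex_hull A x -> forall m : nat,
  dist_le A x (m%:R + Num.sqrt (D ^+ 2 / 2 ^+ m.+1)).
Proof.
move=> hD _ [k [w [p [w_ge0 [w_sum1 [hp ->]]]]]] m.
have [y hy1 hy2] := midpoint_iteration m w_ge0 w_sum1 (fun i => mem_dist_le0 (hp i)).
have hV := variance_le_diam w_ge0 w_sum1 (fun i l => hD _ _ (hp i) (hp l)).
apply: dist_le_widen (dist_le_shift (bary w p) hy1) _.
rewrite add0r addrC lerD2l enormE; apply: ler_wsqrtr.
apply: (le_trans hy2); rewrite [2 ^+ m.+1]exprS invfM mulrA.
by apply: ler_wpM2r; rewrite ?invr_ge0 ?exprn_ge0.
Qed.

End HullDistance.

Section Log2.
Variable R : realType.

Lemma ln2_gt0 : 0 < ln (2 : R).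
Proof. by apply: ln_gt0; rewrite ltr1n. Qed.

Lemma log2X (k : nat) : log2 (2 ^+ k : R) = k%:R.
Proof. by rewrite /log2 lnXn // -[_ *+ k]mulr_natl mulfK // gt_eqF ?ln2_gt0. Qed.

Lemma ler_log2 (x y : R) : 0 < x -> 0 < y -> (log2 x <= log2 y) = (x <= y).
Proof. by move=> x0 y0; rewrite /log2 ler_pM2r ?invr_gt0 ?ln2_gt0 // ler_ln. Qed.

Lemma ltr_log2 (x y : R) : 0 < x -> 0 < y -> (log2 x < log2 y) = (x < y).
Proof. by move=> x0 y0; rewrite /log2 ltr_pM2r ?invr_gt0 ?ln2_gt0 // ltr_ln. Qed.

Lemma log2_sqr (x : R) : 0 < x -> log2 (x ^+ 2) = 2 * log2 x.
Proof. by move=> x0; rewrite /log2 lnXn // -[_ *+ 2]mulr_natl mulrA. Qed.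

End Log2.

Definition halving_bound (R : realType) (L D : R) :=
  forall m : nat, L <= m%:R + Num.sqrt (D ^+ 2 / 2 ^+ m.+1).

Section Bounds.
Variable R : realType.
Implicit Types L D : R.

Lemma halving_bound_sq L D (m : nat) : halving_bound L D -> m%:R <= L ->
  (L - m%:R) ^+ 2 * 2 ^+ m.+1 <= D ^+ 2.
Proof.
move=> hb hm; rewrite -ler_pdivlMr ?exprn_gt0 //.
have h0 : 0 <= D ^+ 2 / 2 ^+ m.+1 by rewrite divr_ge0 ?sqr_ge0 ?exprn_ge0.
rewrite -(sqr_sqrtr h0) ler_pXn2r ?nnegrE ?subr_ge0 ?sqrtr_ge0 //.
by have := hb m; lra.
Qed.

Lemma lower_bound_ceil_log2 (n j : nat) D : (1 <= j <= n)%N -> 0 <= D ->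
  halving_bound (log2 (n%:R : R) - 1) D ->
  (log2 (n%:R : R) - 1 - (Num.ceil (log2 (j%:R : R)))%:~R)
     * Num.sqrt (j%:R) / Num.sqrt ((n - j + 1)%:R) * Num.sqrt (n%:R) <= D.
Proof.
move=> /andP [j_ge1 j_le_n] D_ge0 hb.
set L := log2 n%:R - 1.
have j_gt0 : (0 : R) < j%:R by rewrite ltr0n.
have [m ceil_m] : exists m : nat, Num.ceil (log2 (j%:R : R)) = m.
  exists `|Num.ceil (log2 (j%:R : R))|%N; rewrite gez0_abs // ceil_ge0.
  apply: lt_le_trans (ltrN10 R) _.
  by rewrite divr_ge0 ?ln_ge0 ?ler1n ?ltW ?ln2_gt0.
have j_le : (j%:R : R) <= 2 ^+ m.
  by rewrite -ler_log2 ?exprn_gt0 // log2X -[m%:R]/((m : int)%:~R) -ceil_m ceil_ge.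
rewrite ceil_m -[(m : int)%:~R]/(m%:R : R) -!mulrA.
set S := Num.sqrt _ * _.
have S_ge0 : 0 <= S by rewrite !mulr_ge0 ?invr_ge0 ?sqrtr_ge0.
have [Lm_le0 | Lm_gt0] := leP (L - m%:R) 0.
  exact: le_trans (mulr_le0_ge0 Lm_le0 S_ge0) D_ge0.
have n_gt : (2 * j%:R : R) < n%:R.
  have : log2 (2 ^+ m.+1 : R) < log2 n%:R.
    by move: Lm_gt0; rewrite log2X -addn1 natrD /L; lra.
  rewrite ltr_log2 ?exprn_gt0 ?ltr0n ?(leq_trans j_ge1 j_le_n) // exprS.
  by apply: le_lt_trans; rewrite ler_pM2l.
have n_j : ((n - j + 1)%:R : R) = n%:R - j%:R + 1 by rewrite natrD natrB.
have LmS_ge0 : 0 <= (L - m%:R) * S by rewrite mulr_ge0 // ltW.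
rewrite -(ler_pXn2r (n := 2)) ?nnegrE //.
apply: le_trans (halving_bound_sq (m := m) hb _); last by rewrite -subr_ge0 ltW.
rewrite exprMn ler_pM2l ?exprn_gt0 //.
rewrite /S !exprMn exprVn !sqr_sqrtr ?ler0n // n_j mulrCA mulrC.
rewrite ler_pdivrMr ?exprS; last by lra.
have h1 : 0 <= (2 ^+ m - j%:R) * n%:R :> R by rewrite mulr_ge0 ?subr_ge0.
have h2 : 0 <= 2 ^+ m * (n%:R - 2 * j%:R + 2) :> R.
  by rewrite mulr_ge0 ?exprn_ge0 //; lra.
nra.
Qed.

Lemma lower_bound_large (n : nat) D : (8 <= n)%N -> 0 <= D ->
  halving_bound (log2 (n%:R : R) - 1) D -> 768%:R / 1000%:R * Num.sqrt (n%:R) <= D.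
Proof.
move=> n_ge8 D_ge0 hb.
set m := trunc_log 2 (n %/ 8).
have n_lo : (8 * 2 ^ m <= n)%N.
  have n8_gt0 : (0 < n %/ 8)%N by rewrite divn_gt0.
  by have := trunc_logP (isT : (1 < 2)%N) n8_gt0; rewrite -/m; lia.
have n_hi : (n < 16 * 2 ^ m)%N.
  by have := trunc_log_ltn (n %/ 8) (isT : (1 < 2)%N); rewrite -/m expnS; lia.
set N := (n%:R : R); set P := (2 ^+ m : R).
have N_lo : 8 * P <= N by rewrite /N /P -(ler_nat R) natrM natrX in n_lo.
have N_hi : N < 16 * P by rewrite /N /P -(ltr_nat R) natrM natrX in n_hi.
have P_gt0 : 0 < P by rewrite exprn_gt0.
have N_gt0 : 0 < N by lra.
have gap t : 0 <= t -> t <= log2 N - 1 - m%:R -> t * t * (2 * P) <= D ^+ 2.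
  move=> t_ge0 t_le; rewrite -expr2 -exprS.
  apply: le_trans (halving_bound_sq (m := m) hb _); last lra.
  by rewrite ler_pM2r ?exprn_gt0 // ler_pXn2r ?nnegrE //; lra.
have log_lo : m%:R + 3 <= log2 N.
  have : log2 (2 ^+ (m + 3) : R) <= log2 N.
    rewrite ler_log2 ?exprn_gt0 // exprD -/P mulrC.
    by have -> : (2 : R) ^+ 3 = 8 by rewrite -natrX.
  by rewrite log2X natrD.
have D2 : 2 / 3 * N <= D ^+ 2.
  have [N_big | N_small] := leP (12 * P) N.
    have : log2 (2 ^+ (2 * m + 7) : R) <= log2 (N ^+ 2).
      rewrite ler_log2 ?exprn_gt0 // exprD mulnC exprM -/P.
      have -> : (2 : R) ^+ 7 = 128 by rewrite -natrX.
      by rewrite !expr2; nra.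
    rewrite log2X log2_sqr // natrD natrM => log_hi.
    have h := gap (5 / 2) ltac:(lra) ltac:(lra); lra.
  have h := gap 2 ltac:(lra) ltac:(lra); lra.
have c_ge0 : 0 <= 768%:R / 1000%:R * Num.sqrt N.
  by apply: mulr_ge0; [apply: divr_ge0; exact: ler0n | exact: sqrtr_ge0].
rewrite -(ler_pXn2r (n := 2)) ?nnegrE // exprMn sqr_sqrtr; last exact: ltW.
by rewrite expr2; lra.
Qed.

End Bounds.

Section Diameter.
Variables (R : realType) (n : nat) (A : set 'rV[R]_n).

Lemma mem_convex_hull a : A a -> convex_hull A a.
Proof.
move=> Aa; exists 1%N, (fun _ => 1), (fun _ => a).
by rewrite !big_ord1 scale1r; split=> [_|]; [exact: ler01 | do !split].
Qed.

Lemma enorm_le_diam D : diam A = D%:E ->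
  forall a b, A a -> A b -> enorm (a - b) <= D.
Proof.
move=> dA a b Aa Ab; rewrite -lee_fin -dA.
by apply: ereal_sup_ubound; exists (a, b).
Qed.

Lemma diam_ge0 : A !=set0 -> (0 <= diam A)%E.
Proof.
move=> [a Aa]; apply: le_trans (ereal_sup_ubound _) => /=; last by exists (a, a).
by rewrite subrr enorm0.
Qed.

Lemma hausdorff_halving_bound L D : approx_convex A ->
  (L%:E <= hausdorff A (convex_hull A))%E -> diam A = D%:E -> halving_bound L D.
Proof.
move=> A_convex hH dA m; rewrite -lee_fin; apply: le_trans hH _.
rewrite ge_max; apply/andP; split; apply: ge_ereal_sup => _ [x Ax <-].
  apply: le_trans (_ : edist x (convex_hull A) <= 0%:E)%E _.
    exact/dist_leP/mem_dist_le0/mem_convex_hull.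
  by rewrite lee_fin addr_ge0 ?sqrtr_ge0.
exact/dist_leP/(hull_dist_le A_convex (enorm_le_diam dA)).
Qed.

Lemma diam_ge_of_halving_bound (c L : R) : A !=set0 -> approx_convex A ->
  (L%:E <= hausdorff A (convex_hull A))%E ->
  (forall D, 0 <= D -> halving_bound L D -> c <= D) -> (c%:E <= diam A)%E.
Proof.
move=> A0 A_convex hH hc; have := diam_ge0 A0.
case dA : (diam A) => [D | | ] // D_ge0; last exact: leey.
rewrite lee_fin in D_ge0 *.
exact: hc D_ge0 (hausdorff_halving_bound A_convex hH dA).
Qed.

End Diameter.

Theorem theorem5p3 (R : realType) :
  (forall (n : nat) (A : set 'rV[R]_n),
     (1 <= n)%N -> A !=set0 -> approx_convex A ->
     ((log2 (n%:R : R) - 1)%:E <= hausdorff A (convex_hull A))%E ->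
     forall j : nat, (1 <= j <= n)%N ->
       (((log2 (n%:R : R) - 1 - (Num.ceil (log2 (j%:R : R)))%:~R)
          * Num.sqrt (j%:R) / Num.sqrt ((n - j + 1)%:R) * Num.sqrt (n%:R))%:E
        <= diam A)%E)
  /\
  (forall (n : nat) (A : set 'rV[R]_n),
     (20 <= n)%N -> A !=set0 -> approx_convex A ->
     ((log2 (n%:R : R) - 1)%:E <= hausdorff A (convex_hull A))%E ->
     ((7525%:R / 10000%:R * Num.sqrt (n%:R))%:E <= diam A)%E)
  /\
  (exists N : nat, forall (n : nat) (A : set 'rV[R]_n),
     (N <= n)%N -> A !=set0 -> approx_convex A ->
     ((log2 (n%:R : R) - 1)%:E <= hausdorff A (convex_hull A))%E ->
     ((768%:R / 1000%:R * Num.sqrt (n%:R))%:E <= diam A)%E).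
Proof.
split; [|split].
- move=> n A _ A0 A_convex hH j hj.
  apply: (diam_ge_of_halving_bound A0 A_convex hH) => D D_ge0.
  exact: lower_bound_ceil_log2.
- move=> n A n_ge20 A0 A_convex hH.
  apply: (diam_ge_of_halving_bound A0 A_convex hH) => D D_ge0 hb.
  apply: le_trans (lower_bound_large (leq_trans _ n_ge20) D_ge0 hb) => //.
  by apply: ler_wpM2r; [exact: sqrtr_ge0 | lra].
- exists 8%N => n A n_ge8 A0 A_convex hH.
  apply: (diam_ge_of_halving_bound A0 A_convex hH) => D D_ge0.
  exact: lower_bound_large.
Qed.
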